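(* Let $\{c_n\}_{n\ge1}$ be a real sequence, $\{d_{n+1}\}_{n\ge1}$ a positive chain sequence, and let $P_0(x)=1$, $P_1(x)=x-c_1$, $P_{n+1}(x)=(x-c_{n+1})P_n(x)-d_{n+1}(x^2+1)P_{n-1}(x)$ for $n\ge1$. Then the zeros $x_j^{(n)}$, $j=1,\dots,n$, of $P_n$ are real and simple, and, ordering them so that $x_n^{(n)}<x_{n-1}^{(n)}<\dots<x_1^{(n)}$, they interlace: \[ x_{n+1}^{(n+1)}<x_n^{(n)}<x_n^{(n+1)}<\dots<x_2^{(n+1)}<x_1^{(n)}<x_1^{(n+1)},\qquad n\ge1 . \]
   Context: A sequence $\{d_{n+1}\}_{n\ge1}$ is a positive chain sequence if there is a sequence $\{g_{n+1}\}_{n\ge0}$ with $0\le g_1<1$, $0<g_n<1$ for $n\ge2$, and $d_{n+1}=(1-g_n)g_{n+1}$ for $n\ge1$. *)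

From HB Require Import structures.
From mathcomp Require Import all_boot all_order all_algebra.
From mathcomp Require Import reals.
Set Implicit Arguments. Unset Strict Implicit. Unset Printing Implicit Defensive.
Import Order.TTheory GRing.Theory Num.Theory.
Local Open Scope ring_scope.

(* Only the values d (n.+1), n >= 1, are relevant. *)
Definition positive_chain_sequence (R : realType) (d : nat -> R) : Prop :=
  exists g : nat -> R,
    [/\ 0 <= g 1%N, g 1%N < 1,
        (forall n : nat, (2 <= n)%N -> 0 < g n /\ g n < 1) &
        (forall n : nat, (1 <= n)%N -> d n.+1 = (1 - g n) * g n.+1)].

Fixpoint Pseq (R : realType) (c d : nat -> R) (n : nat) : {poly R} :=
  match n with
  | 0 => 1
  | 1 => 'X - (c 1%N)%:P
  | (m.+1 as k).+1 =>
      ('X - (c k.+1)%:P) * Pseq c d k - (d k.+1)%:P * ('X ^+ 2 + 1) * Pseq c d m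
  end.

(* The leading coefficient u_n of P_n satisfies u_{n+1} = u_n - d_{n+1} u_{n-1},
   and the parameters g of the chain sequence give u_{n+1} >= (1 - g_{n+1}) u_n > 0,
   so P_n has degree n and a positive leading coefficient.  At a zero y of P_{n+1}
   the recurrence reads P_{n+2}(y) = - d_{n+2} (y^2 + 1) P_n(y) with d_{n+2} > 0.
   Hence, if the zeros of P_n and P_{n+1} interlace, P_{n+2} alternates in sign at
   the n+1 zeros of P_{n+1}; together with its signs at -oo and +oo, the intermediate
   value theorem puts one zero of P_{n+2} in each of the n+2 gaps, and these are all
   of its zeros. *)

From mathcomp Require Import all_boot all_order all_algebra.
From mathcomp Require Import reals polyrcf.
From mathcomp Require Import lra zify.
From Stdlib Require Import ClassicalEpsilon.
Set Implicit Arguments. Unset Strict Implicit. Unset Printing Implicit Defensive.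
Import Order.TTheory GRing.Theory Num.Theory.
Local Open Scope ring_scope.

Lemma chain_recurrence_gt0 (R : realDomainType) (g u : nat -> R) :
    (forall n, (1 <= n)%N -> 0 <= g n < 1) ->
    0 < u 0%N -> (1 - g 1%N) * u 0%N <= u 1%N ->
    (forall n, u n.+2 = u n.+1 - (1 - g n.+1) * g n.+2 * u n) ->
  forall n, 0 < u n.
Proof.
move=> g_bnd u0_gt0 u1_ge u_rec.
suff ratio n : 0 < u n /\ (1 - g n.+1) * u n <= u n.+1 by move=> n; case: (ratio n).
elim: n => [//|n [un_gt0 un1_ge]].
have /andP[_ gn1_lt1] := g_bnd n.+1 isT.
have /andP[gn2_ge0 _] := g_bnd n.+2 isT.
have un1_gt0 : 0 < u n.+1 by apply: lt_le_trans un1_ge; rewrite mulr_gt0 ?subr_gt0.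
split=> //; rewrite u_rec -mulrA.
have : g n.+2 * ((1 - g n.+1) * u n) <= g n.+2 * u n.+1 by rewrite ler_wpM2l.
lra.
Qed.

Section Interlace.
Variable R : realFieldType.
Implicit Types (a b : nat -> R) (n : nat) (p : {poly R}).

Definition strictly_decreasing n a := forall j, (1 <= j < n)%N -> a j.+1 < a j.

Definition interlace n a b := forall j, (1 <= j <= n)%N -> b j.+1 < a j /\ a j < b j.

Lemma strictly_decreasing_lt n a : strictly_decreasing n a ->
  forall i j, (1 <= i)%N -> (i < j <= n)%N -> a j < a i.
Proof.
move=> a_decr i j i1 /andP[]; elim: j => // j IH.
rewrite ltnS leq_eqVlt => /orP[/eqP<- | ij] jn; first by apply: a_decr; lia.
by apply: lt_trans (a_decr j _) (IH ij _); lia.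
Qed.

Lemma interlace_decreasing_l n a b : interlace n a b -> strictly_decreasing n a.
Proof.
move=> ab j /andP[j1 jn].
have [lt_b _] := ab j ltac:(lia).
have [_ lt_a] := ab j.+1 jn.
exact: lt_trans lt_a lt_b.
Qed.

Lemma interlace_decreasing_r n a b : interlace n a b -> strictly_decreasing n.+1 b.
Proof.
move=> ab j /andP[j1 jn]; have [lt_b lt_a] := ab j ltac:(lia).
exact: lt_trans lt_b lt_a.
Qed.

Lemma prod_lt0_sign (I : eqType) (s : seq I) (F : I -> R) :
  (forall i, i \in s -> F i < 0) -> 0 < (-1) ^+ size s * \prod_(i <- s) F i.
Proof.
elim: s => [|i s IH] F_lt0; first by rewrite big_nil mulr1.
rewrite big_cons /= exprS mulrACA mulN1r; apply: mulr_gt0.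
  by rewrite oppr_gt0 F_lt0 ?mem_head.
by apply: IH => k ks; rewrite F_lt0 // in_cons ks orbT.
Qed.

Lemma prod_sub_sign n a y j : strictly_decreasing n a -> (1 <= j <= n.+1)%N ->
    ((j <= n)%N -> a j < y) -> ((1 < j)%N -> y < a j.-1) ->
  0 < (-1) ^+ j.-1 * \prod_(i <- iota 1 n) (y - a i).
Proof.
move=> a_decr /andP[j1 jn] a_lt_y y_lt_a.
have a_le i k : (1 <= i)%N -> (i <= k <= n)%N -> a k <= a i.
  move=> i1 /andP[]; rewrite leq_eqVlt => /orP[/eqP-> //|ik] kn.
  by rewrite ltW // (strictly_decreasing_lt a_decr) ?ik.
rewrite -(subnKC (_ : j.-1 <= n)%N) ?iotaD ?big_cat /=; last by lia.
rewrite mulrA; apply: mulr_gt0.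
  rewrite -[X in (-1) ^+ X](size_iota 1 j.-1); apply: prod_lt0_sign => i.
  rewrite mem_iota subr_lt0 => i_lt_j; apply: lt_le_trans (y_lt_a _) _; first by lia.
  by apply: a_le; lia.
rewrite big_seq; apply: prodr_gt0 => i; rewrite mem_iota subr_gt0 => j_le_i.
by apply: le_lt_trans (a_le j i _ _) (a_lt_y _); lia.
Qed.

Definition root_factorization (p : {poly R}) n a :=
  p = lead_coef p *: \prod_(i <- iota 1 n) ('X - (a i)%:P).

Lemma root_factorization_horner p n a y : root_factorization p n a ->
  p.[y] = lead_coef p * \prod_(i <- iota 1 n) (y - a i).
Proof.
move=> p_eq; rewrite {1}p_eq hornerZ horner_prod.
by under eq_bigr do rewrite hornerXsubC.
Qed.

Lemma root_factorization_root p n a j : root_factorization p n a ->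
  (1 <= j <= n)%N -> root p (a j).
Proof.
move=> p_eq jn; rewrite rootE (root_factorization_horner _ p_eq) mulf_eq0.
rewrite prodf_seq_eq0; apply/orP; right; apply/hasP; exists j.
  by rewrite mem_iota; lia.
by rewrite subrr eqxx.
Qed.

Lemma root_factorization_of_roots p n b : size p = n.+1 -> strictly_decreasing n b ->
  (forall j, (1 <= j <= n)%N -> root p (b j)) -> root_factorization p n b.
Proof.
move=> size_p b_decr b_root.
rewrite /root_factorization -(big_map b predT (fun z => 'X - z%:P)).
apply: all_roots_prod_XsubC; first by rewrite size_map size_iota.
  by apply/allP => z /mapP[j]; rewrite mem_iota => jn ->; apply: b_root; lia.
rewrite uniq_rootsE map_inj_in_uniq ?iota_uniq // => i k.
rewrite !mem_iota => i_n k_n /eqP b_ik.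
have [ik|ki|//] := ltngtP i k; move: b_ik; [rewrite gt_eqF | rewrite lt_eqF] => //;
  by apply: (strictly_decreasing_lt b_decr); lia.
Qed.

Lemma interlace_sign p n a b j : root_factorization p n a -> 0 < lead_coef p ->
  interlace n a b -> (1 <= j <= n.+1)%N -> 0 < (-1) ^+ j.-1 * p.[b j].
Proof.
move=> p_eq lc_gt0 ab jn; rewrite (root_factorization_horner _ p_eq) mulrCA.
apply: mulr_gt0 => //; apply: (prod_sub_sign _ jn).
- exact: interlace_decreasing_l ab.
- by move=> j_n; have [] := ab j ltac:(lia).
- by move=> j1; have [] := ab j.-1 ltac:(lia); rewrite prednK //; lia.
Qed.

End Interlace.

Section InterlacingRoots.
Variable R : rcfType.
Implicit Types (p : {poly R}) (a b e : nat -> R).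

Lemma poly_gt0_pinfty p x : 0 < lead_coef p -> exists2 y, x < y & 0 < p.[y].
Proof.
move=> lc_gt0; have [M p_ge_lc] := poly_pinfty_gt_lc lc_gt0.
exists (Num.max M (x + 1)); first by rewrite lt_max ltrDl ltr01 orbT.
by apply: lt_le_trans lc_gt0 (p_ge_lc _ _); rewrite le_max lexx.
Qed.

Lemma poly_sign_minfty p k x : size p = k.+1 -> 0 < lead_coef p ->
  exists2 y, y < x & 0 < (-1) ^+ k * p.[y].
Proof.
move=> size_p lc_gt0; pose q := (-1) ^+ k *: (p \Po - 'X).
have lc_q : lead_coef q = lead_coef p.
  rewrite lead_coefZ lead_coef_comp ?size_polyN ?size_polyX // lead_coefN lead_coefX.
  by rewrite size_p /= mulrCA -exprMn mulrNN mulr1 expr1n mulr1.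
have [|y x_lt_y q_gt0] := poly_gt0_pinfty (p := q) (- x); first by rewrite lc_q.
exists (- y); first by rewrite ltrNl.
by move: q_gt0; rewrite hornerZ horner_comp hornerN hornerX.
Qed.

Lemma roots_between p e k :
    (forall j, (j < k)%N -> e j.+1 < e j) ->
    (forall j, (j <= k)%N -> 0 < (-1) ^+ j * p.[e j]) ->
  exists b, forall j, (1 <= j <= k)%N -> [/\ e j < b j, b j < e j.-1 & root p (b j)].
Proof.
move=> e_decr e_sign.
apply: (choice (fun j y => (1 <= j <= k)%N -> [/\ e j < y, y < e j.-1 & root p y])).
case=> [|i]; first by exists 0.
have [ik|] := boolP (i < k)%N; last by exists 0 => /andP[_ /negP].
have sign_change : p.[e i.+1] * p.[e i] < 0.
  have := mulr_gt0 (e_sign i.+1 ik) (e_sign i (ltnW ik)).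
  by rewrite exprS mulN1r !mulNr mulrACA -expr2 sqrr_sign mul1r oppr_gt0.
have [y] := poly_ivtoo (ltW (e_decr i ik)) sign_change.
by rewrite in_itv /= => /andP[lt_y y_lt] y_root; exists y.
Qed.

Lemma interlacing_roots p n a :
    size p = n.+2 -> 0 < lead_coef p -> strictly_decreasing n a ->
    (forall j, (1 <= j <= n)%N -> 0 < (-1) ^+ j * p.[a j]) ->
  exists2 b, root_factorization p n.+1 b & interlace n a b.
Proof.
move=> size_p lc_gt0 a_decr a_sign.
have [lo lo_lt lo_sign] := poly_sign_minfty (a n) size_p lc_gt0.
have [hi hi_gt hi_sign] := poly_gt0_pinfty (Num.max (a 1%N) lo) lc_gt0.
(* [e] extends [a] by a point on each side where [p] has its sign at infinity, so
   that [p] alternates in sign along [e 0 > e 1 > ... > e n.+1]. *)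
pose e j := if j == 0%N then hi else if (j <= n)%N then a j else lo.
have e_decr j : (j < n.+1)%N -> e j.+1 < e j.
  rewrite /e; case: j => [|j] jn /=.
    by apply: le_lt_trans hi_gt; case: ifP; rewrite le_max lexx ?orbT.
  rewrite ltnS in jn; rewrite jn; case: ifP => [j2n | /negbT j2n].
    by apply: a_decr; lia.
  by have -> : j.+1 = n by lia.
have e_sign j : (j <= n.+1)%N -> 0 < (-1) ^+ j * p.[e j].
  rewrite /e; case: j => [|j] jn /=; first by rewrite mul1r.
  by case: ifP => [j_n | /negbT j_n]; [apply: a_sign | have -> : j = n by lia].
have e_a j : (1 <= j <= n)%N -> e j = a j by rewrite /e; case: j => //= j ->.
have [b b_between] := roots_between e_decr e_sign.
have ab : interlace n a b.
  move=> j jn; have [_ lt_e _] := b_between j.+1 ltac:(lia).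
  have [e_lt _ _] := b_between j ltac:(lia).
  by rewrite e_a in lt_e e_lt.
exists b => //; apply: root_factorization_of_roots => //.
  exact: interlace_decreasing_r ab.
by move=> j jn; have [] := b_between j jn.
Qed.

End InterlacingRoots.

Section PseqZeros.
Variables (R : realType) (c d : nat -> R).
Hypothesis d_chain : positive_chain_sequence d.

Local Notation P := (Pseq c d).

Lemma PseqSS n :
  P n.+2 = ('X - (c n.+2)%:P) * P n.+1 - (d n.+2)%:P * ('X ^+ 2 + 1) * P n.
Proof. by []. Qed.

Lemma size_Pseq_le n : (size (P n) <= n.+1)%N.
Proof.
elim/ltn_ind: n => -[|[|n]] IH; first by rewrite size_poly1.
  by rewrite size_XsubC.
rewrite PseqSS; apply: leq_trans (size_polyD _ _) _; rewrite size_polyN geq_max.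
apply/andP; split.
  apply: leq_trans (size_polyMleq _ _) _; rewrite size_XsubC.
  by rewrite !addSn add0n succnK !ltnS IH.
rewrite -mulrA mul_polyC; apply: leq_trans (size_scale_leq _ _) _.
apply: leq_trans (size_polyMleq _ _) _; rewrite -polyC1 size_XnaddC //.
by rewrite !addSn add0n succnK !ltnS IH.
Qed.

Lemma coef_PseqSS n : (P n.+2)`_n.+2 = (P n.+1)`_n.+1 - d n.+2 * (P n)`_n.
Proof.
have P_vanish m k : (m < k)%N -> (P m)`_k = 0.
  by move=> mk; apply: nth_default; apply: leq_trans (size_Pseq_le m) mk.
rewrite PseqSS coefB mulrBl coefB coefXM coefCM -mulrA coefCM mulrDl mul1r coefD coefXnM.
by rewrite (P_vanish n.+1 n.+2) // (P_vanish n n.+2) // mulr0 subr0 addr0 !subSS subn0.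
Qed.

Lemma coef_Pseq_gt0 n : 0 < (P n)`_n.
Proof.
have [g [g1_ge0 g1_lt1 g_bnd d_eq]] := d_chain.
apply: (chain_recurrence_gt0 (g := g) (u := fun n => (P n)`_n)) => [k k1 | | | k].
- case: k k1 => [|[|k]] // _; first by rewrite g1_ge0 g1_lt1.
  by have [/ltW -> ->] := g_bnd k.+2 isT.
- by rewrite /= coefC.
- by rewrite /= coefB coefX !coefC /= subr0 mulr1 gerBl.
- by rewrite coef_PseqSS d_eq.
Qed.

Lemma size_Pseq n : size (P n) = n.+1.
Proof.
apply/eqP; rewrite eqn_leq size_Pseq_le ltnNge; apply/negP => /leq_sizeP P_vanish.
by have := coef_Pseq_gt0 n; rewrite P_vanish ?ltxx.
Qed.

Lemma lead_coef_Pseq_gt0 n : 0 < lead_coef (P n).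
Proof. by rewrite lead_coefE size_Pseq coef_Pseq_gt0. Qed.

Lemma horner_PseqSS_root n y : root (P n.+1) y ->
  (P n.+2).[y] = - (d n.+2 * (y ^+ 2 + 1)) * (P n).[y].
Proof.
by move=> /rootP P_y; rewrite PseqSS !hornerE P_y mulr0 sub0r mulNr.
Qed.

Lemma d_gt0 n : 0 < d n.+2.
Proof.
have [g [_ g1_lt1 g_bnd d_eq]] := d_chain.
rewrite d_eq // mulr_gt0 //; last by have [] := g_bnd n.+2 isT.
by rewrite subr_gt0; case: n => [|n] //; have [] := g_bnd n.+2 isT.
Qed.

Definition interlacing_zeros n (a b : nat -> R) :=
  [/\ root_factorization (P n) n a, root_factorization (P n.+1) n.+1 b & interlace n a b].

Lemma interlacing_zeros0 a : exists b, interlacing_zeros 0 a b.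
Proof.
have [||b P1_b ab] := interlacing_roots (size_Pseq 1) (lead_coef_Pseq_gt0 1) (a := a).
- by move=> j; lia.
- by move=> j; lia.
by exists b; split; rewrite // /root_factorization /= big_nil lead_coef1 scale1r.
Qed.

Lemma interlacing_zerosS n a b :
  interlacing_zeros n a b -> exists e, interlacing_zeros n.+1 b e.
Proof.
move=> [Pn_a Pn1_b ab].
have b_sign j : (1 <= j <= n.+1)%N -> 0 < (-1) ^+ j * (P n.+2).[b j].
  move=> jn; rewrite horner_PseqSS_root ?(root_factorization_root Pn1_b) //.
  case: j jn => // j jn; rewrite exprS mulN1r !mulNr mulrN opprK mulrCA.
  apply: mulr_gt0; first by rewrite mulr_gt0 ?d_gt0 ?ltr_wpDl ?sqr_ge0.
  exact: interlace_sign Pn_a (lead_coef_Pseq_gt0 n) ab jn.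
have [e Pn2_e be] := interlacing_roots (size_Pseq n.+2) (lead_coef_Pseq_gt0 n.+2)
  (interlace_decreasing_r ab) b_sign.
by exists e; split.
Qed.

(* P_0 has no zeros, so level 0 is a dummy; the zeros of P_{n+1} are chosen to
   interlace with those already chosen for P_n. *)
Fixpoint Pseq_zeros n : nat -> R :=
  if n is m.+1 then epsilon (inhabits (fun=> 0)) (interlacing_zeros m (Pseq_zeros m))
  else fun=> 0.

Lemma Pseq_zerosP n : interlacing_zeros n (Pseq_zeros n) (Pseq_zeros n.+1).
Proof.
elim: n => [|n IH]; apply: epsilon_spec; first exact: interlacing_zeros0.
exact: interlacing_zerosS IH.
Qed.

End PseqZeros.

Theorem theorem2p2 (R : realType) (c d : nat -> R) :
  positive_chain_sequence d ->
  exists x : nat -> nat -> R,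
    (forall n : nat, (1 <= n)%N ->
       [/\ size (Pseq c d n) = n.+1,
           (forall j : nat, (1 <= j <= n)%N -> root (Pseq c d n) (x n j)) &
           (forall j : nat, (1 <= j < n)%N -> x n j.+1 < x n j)]) /\
    (forall n : nat, (1 <= n)%N ->
       forall j : nat, (1 <= j <= n)%N ->
         x n.+1 j.+1 < x n j /\ x n j < x n.+1 j).
Proof.
move=> d_chain; exists (Pseq_zeros c d).
split=> n _; have [Pn_zeros _ interl] := Pseq_zerosP c d_chain n; last exact: interl.
split; first exact: size_Pseq d_chain n.
- by move=> j; apply: root_factorization_root Pn_zeros.
- exact: interlace_decreasing_l interl.
Qed.
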